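(* Let $G$ be a finite group, let $\Pi$ be the set of prime divisors of $|G|$, and let $\mathrm{GKC}(G)$ be the Gruenberg--Kegel complex of $G$. Then: (i) the $1$-skeleton of $\mathrm{GKC}(G)$ is the Gruenberg--Kegel graph of $G$; (ii) if $G$ is nilpotent, then $\mathrm{GKC}(G)$ is a simplex, i.e. $\Pi$ itself is a simplex of $\mathrm{GKC}(G)$; (iii) there is a positive integer $d(G)$ such that, for positive integers $n$, $\mathrm{GKC}(G^n)$ is a simplex if and only if $n\ge d(G)$, where $G^n$ is the direct product of $n$ copies of $G$.
   Context: The Gruenberg--Kegel complex $\mathrm{GKC}(G)$ of a finite group $G$ has vertex set $\Pi$, the set of prime divisors of $|G|$, and a subset $\Gamma\subseteq\Pi$ is a simplex if and only if $G$ contains an element whose order is the product of the primes in $\Gamma$. The Gruenberg--Kegel graph of $G$ has vertex set $\Pi$, with distinct primes $p,q$ adjacent if $G$ contains an element of order $pq$. The $1$-skeleton of a simplicial complex is the graph formed by its simplices of cardinality at most $2$. A complex is called a simplex if its whole vertex set is one of its simplices. *)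

From mathcomp Require Import all_boot all_fingroup all_solvable.
Set Implicit Arguments. Unset Strict Implicit. Unset Printing Implicit Defensive.
Local Open Scope group_scope.

Definition GKvertices (gT : finGroupType) (G : {set gT}) : seq nat :=
  primes #|G|.

Definition GKC_simplex (gT : finGroupType) (G : {set gT}) (s : seq nat) : bool :=
  [&& uniq s, all (fun p => p \in GKvertices G) s &
      [exists x in G, #[x] == \prod_(p <- s) p]%N].

Definition GKC_skel_vertex (gT : finGroupType) (G : {set gT}) (p : nat) : bool :=
  GKC_simplex G [:: p].
Definition GKC_skel_edge (gT : finGroupType) (G : {set gT}) (p q : nat) : bool :=
  GKC_simplex G [:: p; q].

Definition GKgraph_edge (gT : finGroupType) (G : {set gT}) (p q : nat) : bool :=
  [&& p \in GKvertices G, q \in GKvertices G, p != q &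
      [exists x in G, #[x] == p * q]%N].

Definition GKC_is_simplex (gT : finGroupType) (G : {set gT}) : bool :=
  GKC_simplex G (GKvertices G).

Definition powG (gT : finGroupType) (G : {group gT}) (n : nat)
  : {group {dffun forall i : 'I_n, (fun _ : 'I_n => gT) i}} :=
  setXn_group (fun _ : 'I_n => G).

(* The complex GKC(G) is a simplex exactly when a single element of G has an
   order divisible by every prime of |G|: a suitable power of such an element
   then has order the product of these primes.  For nilpotent G an element of
   order exp(G) works, since exp(G) and |G| have the same prime divisors.  In
   G^n the order of a tuple is the lcm of the orders of its entries, so
   GKC(G^n) is a simplex iff some n elements of G jointly cover the primes of
   |G| by their orders; this property is preserved when n grows and holds for
   n = |G|, where the tuple listing all elements of G covers them by Cauchy's
   theorem. *)
From mathcomp Require Import all_boot all_fingroup all_solvable.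
Set Implicit Arguments. Unset Strict Implicit. Unset Printing Implicit Defensive.

Local Open Scope group_scope.

Lemma dvdn_prod_uniq_primes (s : seq nat) n : uniq s -> all prime s ->
  (\prod_(p <- s) p %| n)%N = all (dvdn^~ n) s.
Proof.
elim: s => [|p s IHs] /=; first by rewrite big_nil dvd1n.
case/andP=> p_s uniq_s /andP[p_pr s_pr].
have coprime_p_s : coprime p (\prod_(q <- s) q).
  rewrite big_seq (@big_ind _ (coprime p)) ?coprimen1 //.
    by move=> a b; rewrite coprimeMr => -> ->.
  move=> q q_s; have q_pr := allP s_pr q q_s.
  rewrite prime_coprime // dvdn_prime2 //.
  by apply: contraNneq p_s => ->.
by rewrite big_cons Gauss_dvd // IHs.
Qed.

Lemma dvdn_prod_primes n m :
  (\prod_(p <- primes n) p %| m)%N = all (dvdn^~ m) (primes n).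
Proof.
rewrite dvdn_prod_uniq_primes ?primes_uniq //.
by apply/allP => p; rewrite mem_primes => /andP[].
Qed.

Lemma exists_elt_order_dvdn (gT : finGroupType) (G : {group gT}) x r :
  x \in G -> (r %| #[x])%N -> exists2 y, y \in G & #[y] = r.
Proof.
move=> xG r_x; exists (x ^+ (#[x] %/ r)); first exact: groupX.
by rewrite orderXdiv ?dvdn_div // divnA // mulKn.
Qed.

Section GruenbergKegelComplex.

Variables (gT : finGroupType) (G : {group gT}).

Lemma GKC_skel_vertexE p : GKC_skel_vertex G p = (p \in GKvertices G).
Proof.
rewrite /GKC_skel_vertex /GKC_simplex /= big_seq1 andbT.
apply/andP/idP => [[] // | p_G]; split=> //.
move: p_G; rewrite /GKvertices mem_primes => /and3P[p_pr _ p_dvd].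
by have [x xG <-] := Cauchy p_pr p_dvd; apply/exists_inP; exists x.
Qed.

Lemma GKC_skel_edgeE p q : p != q -> GKC_skel_edge G p q = GKgraph_edge G p q.
Proof.
move=> neq_pq; rewrite /GKC_skel_edge /GKC_simplex /GKgraph_edge /=.
by rewrite big_cons big_seq1 inE neq_pq andbT; case: (p \in _); case: (q \in _).
Qed.

Lemma GKC_is_simplexE :
  GKC_is_simplex G = [exists x in G, all (dvdn^~ #[x]) (primes #|G|)].
Proof.
rewrite /GKC_is_simplex /GKC_simplex /GKvertices primes_uniq allss /=.
apply/exists_inP/exists_inP => [[x xG /eqP ox] | [x xG]].
  by exists x; rewrite // -dvdn_prod_primes ox.
rewrite -dvdn_prod_primes => /(exists_elt_order_dvdn xG)[y yG oy].
by exists y; rewrite ?oy.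
Qed.

Lemma nilpotent_GKC_is_simplex : nilpotent G -> GKC_is_simplex G.
Proof.
case/exponent_witness=> x xG exp_x; rewrite GKC_is_simplexE.
apply/exists_inP; exists x => //; apply/allP => p p_G.
have : p \in \pi(#[x]) by rewrite -exp_x pi_of_exponent.
by rewrite mem_primes => /and3P[].
Qed.

End GruenbergKegelComplex.

Section DirectPowerOrder.

Variables (I : finType) (hT : finGroupType).
Implicit Types f : {dffun forall i : I, (fun _ : I => hT) i}.

Lemma expg_ffun f k i : (f ^+ k) i = f i ^+ k.
Proof. by elim: k => [|k IHk]; rewrite ?expg0 ?oneg_ffun // !expgS mulg_ffun IHk. Qed.

Lemma order_dvdn_ffun f m : (#[f] %| m)%N = [forall i, #[f i] %| m]%N.
Proof.
rewrite order_dvdn; apply/eqP/forallP => [fm1 i | fi_m].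
  by rewrite order_dvdn -expg_ffun fm1 oneg_ffun.
by apply/ffunP => i; rewrite expg_ffun oneg_ffun; apply/eqP; rewrite -order_dvdn.
Qed.

Lemma prime_dvdn_order_ffun f p :
  prime p -> (p %| #[f])%N = [exists i, p %| #[f i]]%N.
Proof.
move=> p_pr; apply/idP/existsP => [p_f | [i p_fi]].
  have f_prod : (#[f] %| \prod_i #[f i])%N.
    by rewrite order_dvdn_ffun; apply/forallP => i; rewrite (bigD1 i) ?dvdn_mulr.
  move: (dvdn_trans p_f f_prod); rewrite Euclid_dvd_prod // big_has.
  by case/hasP=> i _ p_fi; exists i.
apply: dvdn_trans p_fi _.
by move: (dvdnn #[f]); rewrite order_dvdn_ffun => /forallP.
Qed.

End DirectPowerOrder.

Section DirectPowers.

Variables (gT : finGroupType) (G : {group gT}).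

Lemma card_powG n : #|powG G n| = (#|G| ^ n)%N.
Proof. by rewrite cardsXn prod_nat_const card_ord. Qed.

Lemma GKC_is_simplex_powGE n : (0 < n)%N ->
  GKC_is_simplex (powG G n) =
  [exists f in powG G n, all (fun p => [exists i, p %| #[f i]]%N) (primes #|G|)].
Proof.
move=> n_gt0; rewrite GKC_is_simplexE card_powG primesX //.
apply: eq_existsb => f; congr (_ && _); apply: eq_in_all => p.
by rewrite mem_primes => /andP[p_pr _]; rewrite prime_dvdn_order_ffun.
Qed.

Lemma GKC_is_simplex_powG_mono m n : (0 < m <= n)%N ->
  GKC_is_simplex (powG G m) -> GKC_is_simplex (powG G n).
Proof.
case/andP=> m_gt0 le_mn; have n_gt0 := leq_trans m_gt0 le_mn.
rewrite !GKC_is_simplex_powGE // => /exists_inP[f fG cover_f].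
pose g : {dffun forall i : 'I_n, (fun _ => gT) i} :=
  [ffun i => if insub (val i) is Some j then f j else 1].
have g_widen j : g (widen_ord le_mn j) = f j by rewrite ffunE /= valK.
apply/exists_inP; exists g.
  apply/setXnP => i; rewrite ffunE; case: insub => [j|]; last exact: group1.
  by move/setXnP: fG; apply.
apply: sub_all cover_f => p /existsP[j p_fj].
by apply/existsP; exists (widen_ord le_mn j); rewrite g_widen.
Qed.

Lemma GKC_is_simplex_powG_card : GKC_is_simplex (powG G #|G|).
Proof.
have G_gt0 : (0 < #|G|)%N by rewrite cardG_gt0.
pose f : {dffun forall i : 'I_#|G|, (fun _ => gT) i} := [ffun i => enum_val i].
rewrite GKC_is_simplex_powGE //; apply/exists_inP; exists f.
  by apply/setXnP => i; rewrite ffunE enum_valP.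
apply/allP => p; rewrite mem_primes => /and3P[p_pr _ p_dvd].
have [x xG ox] := Cauchy p_pr p_dvd.
apply/existsP; exists (enum_rank_in xG x).
by rewrite ffunE enum_rankK_in // ox.
Qed.

End DirectPowers.

Theorem mainTheorem5 (gT : finGroupType) (G : {group gT}) :
  [/\ (* (i) the 1-skeleton of GKC(G) is the Gruenberg--Kegel graph *)
      (forall p : nat, GKC_skel_vertex G p = (p \in GKvertices G))
      /\ (forall p q : nat, p != q -> GKC_skel_edge G p q = GKgraph_edge G p q),
      (* (ii) nilpotent groups have a simplex as GKC *)
      nilpotent G -> GKC_is_simplex G &
      (* (iii) *)
      exists d : nat, (0 < d)%N /\
        forall n : nat, (0 < n)%N -> (GKC_is_simplex (powG G n) <-> (d <= n)%N)].
Proof.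
split; first split.
- exact: GKC_skel_vertexE.
- exact: GKC_skel_edgeE.
- exact: nilpotent_GKC_is_simplex.
- pose P n := (0 < n)%N && GKC_is_simplex (powG G n).
  have exP : exists n, P n.
    by exists #|G|; rewrite /P cardG_gt0 GKC_is_simplex_powG_card.
  exists (ex_minn exP); case: ex_minnP => d /andP[d_gt0 Pd] d_min.
  split=> // n n_gt0; split => [Pn | le_dn].
    by apply: d_min; rewrite /P n_gt0.
  by apply: GKC_is_simplex_powG_mono Pd; rewrite d_gt0.
Qed.
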